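(* Along every trajectory of the Physarum dynamics, for every edge $e$ that does not lie on any shortest $s_0$-$s_1$ path, $D_e(t)\to0$ and $Q_e(t)\to 0$ as $t\to\infty$.
   Context: Let $G=(N,E)$ be a finite connected undirected graph with two distinct vertices $s_0$ (source) and $s_1$ (sink). Each edge $e$ has a fixed length $L_e>0$. Each edge has a time-dependent diameter $D_e(t)$ with $D_e(0)>0$, and resistance $R_e=L_e/D_e$. At each time $t$, the vertex potentials $p_v$ (normalized by $p_{s_1}=0$) are the solution of $\sum_{u\in\delta(v)}(p_v-p_u)/R_{uv}=b_v$ for all $v$, where $\delta(v)$ is the set of neighbours of $v$, $b_{s_0}=1$, $b_{s_1}=-1$, $b_v=0$ otherwise; for an edge $e=\{u,v\}$ with an arbitrarily fixed orientation $(u,v)$ the current is $Q_e=(p_u-p_v)/R_e=D_e(p_u-p_v)/L_e$. The diameters evolve by $\dot D_e(t)=|Q_e(t)|-D_e(t)$ for all $e\in E$ (the ''Physarum dynamics''). The length of a path is the sum of $L_e$ over its edges. *)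

From Stdlib Require Import Reals Lra List.
Import ListNotations.
Open Scope R_scope.

(* A finite undirected graph: vertices 0..n-1, edges 0..m-1; edge e has
   endpoints [ends e] = (u,v), which also fixes the orientation (u,v). *)

Fixpoint sumR (m : nat) (f : nat -> R) : R :=
  match m with
  | O => 0
  | S k => sumR k f + f k
  end.

Definition simple_graph (n m : nat) (ends : nat -> nat * nat) : Prop :=
  (forall e, (e < m)%nat ->
     (fst (ends e) < n)%nat /\ (snd (ends e) < n)%nat /\ fst (ends e) <> snd (ends e))
  /\ (forall e e', (e < m)%nat -> (e' < m)%nat -> e <> e' ->
       ~ (ends e = ends e' \/ ends e = (snd (ends e'), fst (ends e')))).

Definition joins (ends : nat -> nat * nat) (e a b : nat) : Prop :=
  ends e = (a, b) \/ ends e = (b, a).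

Inductive walk (m : nat) (ends : nat -> nat * nat) :
    nat -> nat -> list nat -> list nat -> Prop :=
  | walk_nil : forall a, walk m ends a a [a] []
  | walk_cons : forall a b c e vs es,
      (e < m)%nat -> joins ends e a b -> walk m ends b c vs es ->
      walk m ends a c (a :: vs) (e :: es).

Definition path (m : nat) (ends : nat -> nat * nat) (a c : nat) (es : list nat) : Prop :=
  exists vs, walk m ends a c vs es /\ NoDup vs.

Definition connected (n m : nat) (ends : nat -> nat * nat) : Prop :=
  forall a c, (a < n)%nat -> (c < n)%nat -> exists vs es, walk m ends a c vs es.

Definition path_length (L : nat -> R) (es : list nat) : R :=
  fold_right (fun e acc => L e + acc) 0 es.

Definition shortest_path (m : nat) (ends : nat -> nat * nat) (L : nat -> R)
    (a c : nat) (es : list nat) : Prop :=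
  path m ends a c es /\
  forall es', path m ends a c es' -> path_length L es <= path_length L es'.

Definition on_shortest_path (m : nat) (ends : nat -> nat * nat) (L : nat -> R)
    (s0 s1 e : nat) : Prop :=
  exists es, shortest_path m ends L s0 s1 es /\ In e es.

Definition supply (s0 s1 v : nat) : R :=
  if Nat.eqb v s0 then 1 else if Nat.eqb v s1 then -1 else 0.

(* current on edge e, with the orientation (fst (ends e), snd (ends e)):
   Q_e = D_e (p_u - p_v) / L_e  ( = (p_u - p_v)/R_e with R_e = L_e/D_e ) *)
Definition current (ends : nat -> nat * nat) (L : nat -> R) (De : R)
    (p : nat -> R) (e : nat) : R :=
  De * (p (fst (ends e)) - p (snd (ends e))) / L e.

Definition kirchhoff_term (ends : nat -> nat * nat) (L : nat -> R) (De : R)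
    (p : nat -> R) (v e : nat) : R :=
  if Nat.eqb (fst (ends e)) v then (p v - p (snd (ends e))) * De / L e
  else if Nat.eqb (snd (ends e)) v then (p v - p (fst (ends e))) * De / L e
  else 0.

Definition potentials (n m : nat) (ends : nat -> nat * nat) (L : nat -> R)
    (s0 s1 : nat) (D : nat -> R) (p : nat -> R) : Prop :=
  p s1 = 0 /\
  forall v, (v < n)%nat ->
    sumR m (fun e => kirchhoff_term ends L (D e) p v e) = supply s0 s1 v.

Definition tends_to_0_at_infty (f : R -> R) : Prop :=
  forall eps, eps > 0 -> exists T, forall t, t >= T -> Rabs (f t) < eps.

From Stdlib Require Import Reals Lra Lia List Classical IndefiniteDescription.
Import ListNotations.
Open Scope R_scope.

(* Let Ls be the s0-s1 distance and P a shortest path.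
   1. Static cost bound.  The current is a unit flow from s0 to s1 running
      downhill w.r.t. the potentials.  With d, d' the distances from s0 and
      s1, a threshold-cut argument on the excess d + d' - Ls shows that every
      downhill unit flow satisfies  Ls + kappa |q_e| <= sum_e L_e |q_e|  for
      a constant kappa > 0 (lemmas [cost_bound], [off_shortest_path_cost]).
      The same cut argument gives |Q_e| <= 1.
   2. Lyapunov function.  V = sum_e L_e D_e - sum_(e in P) L_e ln D_e
      satisfies V' <= -kappa |Q_e| by the energy identity, an AM-GM bound and
      step 1 ([dissipation_inequality], [lyapunov_rate_le]).
   3. Dynamics.  Diameters stay positive and bounded, V is bounded below, so a
      Barbalat-type lemma gives D_e -> 0.  V nonincreasing keeps the diameters
      on P away from 0, which bounds the energy p(s0), and Q_e^2 <= D_e p(s0) / L_e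
      then gives Q_e -> 0. *)

Lemma Rabs_le_bounds x b : Rabs x <= b -> - b <= x <= b.
Proof. unfold Rabs; destruct (Rcase_abs x); lra. Qed.

Lemma sumR_ext m f g :
  (forall i, (i < m)%nat -> f i = g i) -> sumR m f = sumR m g.
Proof.
  revert f g; induction m as [|m IH]; intros f g H; simpl; auto.
  rewrite (IH f g) by (intros; apply H; lia). rewrite H by lia; reflexivity.
Qed.

Lemma sumR_plus m f g : sumR m (fun i => f i + g i) = sumR m f + sumR m g.
Proof. induction m as [|m IH]; simpl; [lra|]. rewrite IH; lra. Qed.

Lemma sumR_minus m f g : sumR m (fun i => f i - g i) = sumR m f - sumR m g.
Proof. induction m as [|m IH]; simpl; [lra|]. rewrite IH; lra. Qed.

Lemma sumR_scal m c f : sumR m (fun i => c * f i) = c * sumR m f.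
Proof. induction m as [|m IH]; simpl; [lra|]. rewrite IH; lra. Qed.

Lemma sumR_swap n m (f : nat -> nat -> R) :
  sumR n (fun i => sumR m (fun j => f i j)) = sumR m (fun j => sumR n (fun i => f i j)).
Proof.
  induction n as [|n IH]; simpl.
  - induction m as [|m IHm]; simpl; lra.
  - rewrite IH, <- sumR_plus; reflexivity.
Qed.

Lemma sumR_single n a x :
  (a < n)%nat -> sumR n (fun i => if Nat.eqb a i then x else 0) = x.
Proof.
  assert (Hzero : forall k, (k <= a)%nat ->
            sumR k (fun i => if Nat.eqb a i then x else 0) = 0).
  { induction k as [|k IH]; intros Hk; simpl; [lra|].
    destruct (Nat.eqb_spec a k); [lia|]. rewrite IH by lia; lra. }
  induction n as [|n IH]; intros Ha; [lia|]; simpl.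
  destruct (Nat.eqb_spec a n) as [->|Hne].
  - rewrite Hzero by lia; lra.
  - rewrite IH by lia; lra.
Qed.

Lemma sumR_le m f g :
  (forall i, (i < m)%nat -> f i <= g i) -> sumR m f <= sumR m g.
Proof.
  revert f g; induction m as [|m IH]; intros f g H; simpl; [lra|].
  assert (sumR m f <= sumR m g) by (apply IH; intros; apply H; lia).
  assert (f m <= g m) by (apply H; lia). lra.
Qed.

Lemma sumR_nonneg m f : (forall i, (i < m)%nat -> 0 <= f i) -> 0 <= sumR m f.
Proof.
  revert f; induction m as [|m IH]; intros f H; simpl; [lra|].
  assert (0 <= sumR m f) by (apply IH; intros; apply H; lia).
  assert (0 <= f m) by (apply H; lia). lra.
Qed.

Lemma sumR_ge_term m f k :
  (forall i, (i < m)%nat -> 0 <= f i) -> (k < m)%nat -> f k <= sumR m f.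
Proof.
  revert f; induction m as [|m IH]; intros f H Hk; [lia|]; simpl.
  assert (0 <= f m) by (apply H; lia).
  destruct (Nat.eq_dec k m) as [->|Hne].
  - assert (0 <= sumR m f) by (apply sumR_nonneg; intros; apply H; lia). lra.
  - assert (f k <= sumR m f) by (apply IH; [intros; apply H|]; lia). lra.
Qed.

Definition lsum (f : nat -> R) (l : list nat) : R :=
  fold_right (fun e acc => f e + acc) 0 l.

Lemma path_length_lsum L l : path_length L l = lsum L l.
Proof. reflexivity. Qed.

Lemma lsum_ext f g l : (forall e, In e l -> f e = g e) -> lsum f l = lsum g l.
Proof.
  induction l as [|a l IH]; intros H; simpl; auto.
  rewrite H, IH; simpl; auto. intros; apply H; simpl; auto.
Qed.

Lemma lsum_app f l1 l2 : lsum f (l1 ++ l2) = lsum f l1 + lsum f l2.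
Proof. induction l1 as [|a l1 IH]; simpl; [lra|]. rewrite IH; lra. Qed.

Lemma lsum_rev f l : lsum f (rev l) = lsum f l.
Proof. induction l as [|a l IH]; simpl; auto. rewrite lsum_app, IH; simpl; lra. Qed.

Lemma lsum_minus f g l : lsum (fun e => f e - g e) l = lsum f l - lsum g l.
Proof. induction l as [|a l IH]; simpl; [lra|]. rewrite IH; lra. Qed.

Lemma lsum_le f g l : (forall e, In e l -> f e <= g e) -> lsum f l <= lsum g l.
Proof.
  induction l as [|a l IH]; intros H; simpl; [lra|].
  assert (f a <= g a) by (apply H; simpl; auto).
  assert (lsum f l <= lsum g l) by (apply IH; intros; apply H; simpl; auto). lra.
Qed.

Lemma lsum_nonneg f l : (forall e, In e l -> 0 <= f e) -> 0 <= lsum f l.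
Proof.
  induction l as [|a l IH]; intros H; simpl; [lra|].
  assert (0 <= f a) by (apply H; simpl; auto).
  assert (0 <= lsum f l) by (apply IH; intros; apply H; simpl; auto). lra.
Qed.

Lemma lsum_term_lower_bound f g l e :
  (forall x, In x l -> f x <= g x) -> In e l -> lsum f l - lsum g l + g e <= f e.
Proof.
  induction l as [|a l IH]; intros H He; [destruct He|]; simpl in *.
  assert (lsum f l <= lsum g l) by (apply lsum_le; intros; apply H; auto).
  assert (f a <= g a) by (apply H; auto).
  destruct He as [<-|He]; [lra|].
  specialize (IH (fun x Hx => H x (or_intror Hx)) He). lra.
Qed.

(** Walks: concatenation, reversal, and shortcutting a walk into a path. *)

Section Walks.

Variables (n m : nat) (ends : nat -> nat * nat).

Lemma joins_sym e a b : joins ends e a b -> joins ends e b a.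
Proof. unfold joins; tauto. Qed.

Lemma walk_edges a c vs es :
  walk m ends a c vs es -> forall e, In e es -> (e < m)%nat.
Proof.
  induction 1; simpl; intros x Hx; [contradiction|].
  destruct Hx as [<-|Hx]; auto.
Qed.

Lemma walk_vertices a c vs es :
  simple_graph n m ends -> walk m ends a c vs es -> (a < n)%nat ->
  forall x, In x vs -> (x < n)%nat.
Proof.
  intros [Hends _] W; induction W as [a|a b c e vs es He Hj W IH]; intros Ha x Hx.
  - destruct Hx as [<-|[]]; auto.
  - destruct Hx as [<-|Hx]; auto. apply IH; auto.
    destruct (Hends e He) as [Hu [Hv _]].
    destruct Hj as [E|E]; rewrite E in *; auto.
Qed.

Lemma walk_length a c vs es : walk m ends a c vs es -> length vs = S (length es).
Proof. induction 1; simpl; auto. Qed.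

Lemma walk_snoc a b vs es e c :
  walk m ends a b vs es -> (e < m)%nat -> joins ends e b c ->
  walk m ends a c (vs ++ [c]) (es ++ [e]).
Proof.
  induction 1; intros He Hj; simpl; econstructor; eauto. constructor.
Qed.

Lemma walk_app a b vs1 es1 c vs2 es2 :
  walk m ends a b vs1 es1 -> walk m ends b c vs2 es2 ->
  exists vs, walk m ends a c vs (es1 ++ es2).
Proof.
  induction 1 as [|a b' b e vs es He Hj W IH]; intros W2; simpl; eauto.
  destruct (IH W2) as [vs' W']. eexists; econstructor; eauto.
Qed.

Lemma walk_rev a c vs es : walk m ends a c vs es -> walk m ends c a (rev vs) (rev es).
Proof.
  induction 1; simpl; [constructor|].
  eapply walk_snoc; eauto using joins_sym.
Qed.

Lemma path_rev a c es : path m ends a c es -> path m ends c a (rev es).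
Proof.
  intros [vs [W ND]]. exists (rev vs); split; [apply walk_rev | apply NoDup_rev]; auto.
Qed.

Lemma path_bound a c es :
  simple_graph n m ends -> (a < n)%nat -> path m ends a c es ->
  (length es <= n)%nat /\ (forall e, In e es -> (e < m)%nat).
Proof.
  intros Hs Ha [vs [W ND]]; split; [|eapply walk_edges; eauto].
  assert (length vs <= length (seq 0 n))%nat.
  { apply NoDup_incl_length; auto. intros x Hx. apply in_seq.
    pose proof (walk_vertices a c vs es Hs W Ha x Hx). lia. }
  rewrite length_seq in H. apply walk_length in W. lia.
Qed.

Variable L : nat -> R.
Hypothesis HL : forall e, (e < m)%nat -> L e > 0.

Lemma walk_length_nonneg a c vs es : walk m ends a c vs es -> 0 <= path_length L es.
Proof.
  intros W. apply lsum_nonneg. intros e He.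
  apply Rlt_le, HL; eapply walk_edges; eauto.
Qed.

Lemma walk_suffix a c vs es x :
  walk m ends a c vs es -> In x vs ->
  exists vs2 es2, walk m ends x c vs2 es2 /\ (NoDup vs -> NoDup vs2) /\
    path_length L es2 <= path_length L es.
Proof.
  intros W; induction W as [a|a b c e vs es He Hj W IH]; intros Hx.
  - destruct Hx as [<-|[]]. exists [a], []; split; [constructor | split; [auto | lra]].
  - destruct (Nat.eq_dec x a) as [->|Hne].
    + exists (a :: vs), (e :: es); split; [econstructor; eauto | split; [auto | lra]].
    + destruct Hx as [Hx|Hx]; [congruence|].
      destruct (IH Hx) as (vs2 & es2 & W2 & ND & Hl).
      exists vs2, es2; split; [auto | split].
      * intros Hn; apply ND; inversion Hn; auto.
      * pose proof (HL e He). simpl; lra.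
Qed.

Lemma walk_shortcut a c vs es :
  walk m ends a c vs es ->
  NoDup vs \/ exists es', path m ends a c es' /\ path_length L es' < path_length L es.
Proof.
  induction 1 as [a|a b c e vs es He Hj W IH].
  - left; constructor; [simpl; auto | constructor].
  - pose proof (HL e He) as HLe.
    destruct IH as [ND | (es' & (vs' & W' & ND') & Hl)].
    + destruct (in_dec Nat.eq_dec a vs) as [Hin|Hout].
      * right. destruct (walk_suffix _ _ _ _ a W Hin) as (vs2 & es2 & W2 & ND2 & Hl2).
        exists es2; split; [exists vs2; auto | simpl; lra].
      * left; constructor; auto.
    + right. destruct (in_dec Nat.eq_dec a vs') as [Hin|Hout].
      * destruct (walk_suffix _ _ _ _ a W' Hin) as (vs2 & es2 & W2 & ND2 & Hl2).
        exists es2; split; [exists vs2; auto|].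
        pose proof (walk_length_nonneg _ _ _ _ W). simpl; lra.
      * exists (e :: es'); split; [exists (a :: vs'); split; [econstructor|constructor]|]; eauto.
        simpl; lra.
Qed.

Lemma walk_to_path a c vs es :
  walk m ends a c vs es ->
  exists es', path m ends a c es' /\ path_length L es' <= path_length L es.
Proof.
  intros W; destruct (walk_shortcut a c vs es W) as [ND | (es' & P & Hl)].
  - exists es; split; [exists vs; auto | lra].
  - exists es'; split; auto; lra.
Qed.

End Walks.

(** Shortest-path distances. *)

Fixpoint lists_upto (m k : nat) : list (list nat) :=
  match k with
  | O => [nil]
  | S k' => nil :: flat_map (fun l => map (fun e => e :: l) (seq 0 m)) (lists_upto m k')
  end.

Lemma in_lists_upto m k l :
  (length l <= k)%nat -> (forall e, In e l -> (e < m)%nat) -> In l (lists_upto m k).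
Proof.
  revert l; induction k as [|k IH]; intros [|x l] Hl He; simpl in *; auto; try lia.
  right. apply in_flat_map. exists l; split.
  - apply IH; [lia | intros; apply He; auto].
  - apply in_map_iff. exists x; split; auto.
    apply in_seq. pose proof (He x (or_introl eq_refl)). lia.
Qed.

Lemma list_argmin (A : Type) (f : A -> R) (P : A -> Prop) (l : list A) :
  (exists x, P x /\ In x l) ->
  exists x, P x /\ In x l /\ forall y, P y -> In y l -> f x <= f y.
Proof.
  induction l as [|a l IH]; intros [x [Px Hx]]; [destruct Hx|].
  destruct (classic (exists x, P x /\ In x l)) as [Hex|Hno].
  - destruct (IH Hex) as (z & Pz & Iz & Hz).
    destruct (classic (P a /\ f a <= f z)) as [[Pa Ha]|Hnot].
    + exists a; repeat split; [auto | left; auto |].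
      intros y Py [<-|Iy]; [lra | specialize (Hz y Py Iy); lra].
    + exists z; repeat split; [auto | right; auto |].
      intros y Py [<-|Iy]; auto. apply Rnot_lt_le; intros Hlt; apply Hnot; split; auto; lra.
  - assert (a = x) as <- by (destruct Hx as [<-|Hx]; [auto | exfalso; eauto]).
    exists a; repeat split; [auto | left; auto |].
    intros y Py [<-|Iy]; [lra | exfalso; eauto].
Qed.

Section Distances.

Variables (n m : nat) (ends : nat -> nat * nat) (L : nat -> R).
Hypothesis Hsimple : simple_graph n m ends.
Hypothesis Hconn : connected n m ends.
Hypothesis HL : forall e, (e < m)%nat -> L e > 0.

Definition is_distance (a w : nat) (x : R) : Prop :=
  (exists es, path m ends a w es /\ path_length L es = x) /\
  forall es, path m ends a w es -> x <= path_length L es.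

(* Paths are finitely many (they have at most [n] edges), so a shortest one exists. *)
Lemma distance_exists a w : (a < n)%nat -> (w < n)%nat -> exists x, is_distance a w x.
Proof.
  intros Ha Hw.
  destruct (Hconn a w Ha Hw) as (vs & es & W).
  destruct (walk_to_path m ends L HL _ _ _ _ W) as (es0 & P0 & _).
  assert (Hfin : forall es, path m ends a w es -> In es (lists_upto m n)).
  { intros es1 P1. destruct (path_bound n m ends a w es1 Hsimple Ha P1).
    apply in_lists_upto; auto. }
  destruct (list_argmin _ (path_length L) (path m ends a w) (lists_upto m n))
    as (x & Px & _ & Hx); [eauto|].
  exists (path_length L x); split; eauto.
Qed.

Lemma distance_function a :
  (a < n)%nat -> exists d : nat -> R, forall w, (w < n)%nat -> is_distance a w (d w).
Proof.
  intros Ha.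
  assert (H : forall w, exists x, (w < n)%nat -> is_distance a w x).
  { intros w. destruct (Nat.lt_ge_cases w n) as [Hw|Hw].
    - destruct (distance_exists a w Ha Hw) as [x Hx]; eauto.
    - exists 0; intros; lia. }
  exists (fun w => proj1_sig (constructive_indefinite_description _ (H w))).
  intros w Hw. destruct (constructive_indefinite_description _ (H w)); simpl; auto.
Qed.

Lemma is_distance_self a x : is_distance a a x -> x = 0.
Proof.
  intros [(es & (vs & W & _) & Hl) Hmin].
  pose proof (walk_length_nonneg m ends L HL _ _ _ _ W).
  assert (x <= path_length L []).
  { apply Hmin. exists [a]; split; [constructor | repeat constructor; simpl; tauto]. }
  simpl in *; lra.
Qed.

Lemma is_distance_sym a b x y : is_distance a b x -> is_distance b a y -> x = y.
Proof.
  intros [(es & P & Hl) Hmin] [(es' & P' & Hl') Hmin'].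
  pose proof (Hmin _ (path_rev m ends _ _ _ P')).
  pose proof (Hmin' _ (path_rev m ends _ _ _ P)).
  rewrite !path_length_lsum, lsum_rev in *. lra.
Qed.

Lemma is_distance_edge a e u v du dv :
  is_distance a u du -> is_distance a v dv -> (e < m)%nat -> joins ends e u v ->
  dv <= du + L e.
Proof.
  intros [(es & (vs & W & _) & Hl) _] [_ Hv] He Hj.
  destruct (walk_to_path m ends L HL _ _ _ _ (walk_snoc m ends _ _ _ _ _ _ W He Hj))
    as (es' & P' & Hl').
  specialize (Hv es' P'). rewrite !path_length_lsum, lsum_app in *. simpl in Hl'. lra.
Qed.

Lemma distance_lipschitz a d :
  (forall w, (w < n)%nat -> is_distance a w (d w)) ->
  forall e, (e < m)%nat -> Rabs (d (fst (ends e)) - d (snd (ends e))) <= L e.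
Proof.
  intros Hd e He. destruct (proj1 Hsimple e He) as (Hu & Hv & _).
  assert (J : joins ends e (fst (ends e)) (snd (ends e))) by (left; destruct (ends e); auto).
  pose proof (is_distance_edge a e _ _ _ _ (Hd _ Hu) (Hd _ Hv) He J).
  pose proof (is_distance_edge a e _ _ _ _ (Hd _ Hv) (Hd _ Hu) He (joins_sym _ _ _ _ J)).
  apply Rabs_le; lra.
Qed.

Lemma distance_sum_ge s0 s1 w dw dw' Ls :
  is_distance s0 w dw -> is_distance s1 w dw' -> is_distance s0 s1 Ls -> Ls <= dw + dw'.
Proof.
  intros [(es1 & (vs1 & W1 & _) & Hl1) _] [(es2 & P2 & Hl2) _] [_ Hmin].
  destruct (path_rev m ends _ _ _ P2) as (vs2 & W2 & _).
  destruct (walk_app m ends _ _ _ _ _ _ _ W1 W2) as [vs W].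
  destruct (walk_to_path m ends L HL _ _ _ _ W) as (es' & P' & Hl').
  specialize (Hmin es' P'). rewrite !path_length_lsum, lsum_app, lsum_rev in *. lra.
Qed.

Lemma distance_through_edge s0 s1 e x y dx dy Ls :
  (e < m)%nat -> joins ends e x y -> ~ on_shortest_path m ends L s0 s1 e ->
  is_distance s0 x dx -> is_distance s1 y dy -> is_distance s0 s1 Ls ->
  Ls < dx + L e + dy.
Proof.
  intros He Hj Hoff [(es1 & (vs1 & W1 & _) & Hl1) _] [(es2 & P2 & Hl2) _] [_ Hmin].
  apply Rnot_le_lt; intros Hle.
  destruct (path_rev m ends _ _ _ P2) as (vs2 & W2 & _).
  destruct (walk_app m ends _ _ _ _ _ _ _ (walk_snoc m ends _ _ _ _ _ _ W1 He Hj) W2) as [vs W].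
  assert (Hlen : path_length L ((es1 ++ [e]) ++ rev es2) = dx + L e + dy).
  { rewrite !path_length_lsum, !lsum_app, lsum_rev in *. simpl; lra. }
  destruct (walk_shortcut m ends L HL _ _ _ _ W) as [ND | (es' & P' & Hl')].
  - apply Hoff. exists ((es1 ++ [e]) ++ rev es2); split.
    + split; [exists vs; auto|]. intros es' P'. specialize (Hmin es' P'). lra.
    + apply in_or_app; left; apply in_or_app; right; simpl; auto.
  - specialize (Hmin es' P'). lra.
Qed.

End Distances.

(** Unit flows, the electrical current as one, and threshold cuts. *)

(* [q] is a flow of value 1 from [s0] to [s1]: pairing it with the differences
   of any vertex function [phi] gives [phi s0 - phi s1] (this encodes flow
   conservation at every vertex). *)
Definition unit_flow (m : nat) (ends : nat -> nat * nat) (s0 s1 : nat) (q : nat -> R) : Prop :=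
  forall phi : nat -> R,
    sumR m (fun e => q e * (phi (fst (ends e)) - phi (snd (ends e)))) = phi s0 - phi s1.

Definition downhill (pi : nat -> R) (u v : nat) (q : R) : Prop :=
  (0 < q -> pi v < pi u) /\ (q < 0 -> pi u < pi v).

Lemma unit_flow_reverse m ends s0 s1 q :
  unit_flow m ends s0 s1 q -> unit_flow m ends s1 s0 (fun e => - q e).
Proof.
  intros Hq phi. rewrite (sumR_ext m _ (fun e => -1 * (q e * (phi (fst (ends e)) - phi (snd (ends e))))))
    by (intros; ring).
  rewrite sumR_scal, Hq; ring.
Qed.

Lemma downhill_opp pi u v q : downhill pi u v q -> downhill (fun w => - pi w) u v (- q).
Proof. intros [H1 H2]; split; intros; [apply Ropp_lt_contravar, H2 | apply Ropp_lt_contravar, H1]; lra. Qed.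

Lemma current_unit_flow n m ends L s0 s1 (Dt pt : nat -> R) :
  simple_graph n m ends -> (s0 < n)%nat -> (s1 < n)%nat -> s0 <> s1 ->
  potentials n m ends L s0 s1 Dt pt ->
  unit_flow m ends s0 s1 (fun e => current ends L (Dt e) pt e).
Proof.
  intros [Hends _] Hs0 Hs1 Hs01 [_ Hk] phi.
  transitivity (sumR n (fun w => phi w * supply s0 s1 w)).
  - rewrite (sumR_ext n (fun w => phi w * supply s0 s1 w)
      (fun w => sumR m (fun e => phi w * kirchhoff_term ends L (Dt e) pt w e)))
      by (intros w Hw; rewrite sumR_scal, Hk; auto).
    rewrite sumR_swap. apply sumR_ext; intros e He.
    destruct (Hends e He) as (Hu & Hv & Huv).
    set (u := fst (ends e)) in *; set (v := snd (ends e)) in *.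
    rewrite (sumR_ext n _ (fun w =>
        (if Nat.eqb u w then phi u * current ends L (Dt e) pt e else 0)
      + (if Nat.eqb v w then - (phi v * current ends L (Dt e) pt e) else 0))).
    + rewrite sumR_plus, !sumR_single by auto. ring.
    + intros w Hw. unfold kirchhoff_term, current; fold u v.
      destruct (Nat.eqb_spec u w), (Nat.eqb_spec v w); subst; try lia; unfold Rdiv; ring.
  - rewrite (sumR_ext n _ (fun w => (if Nat.eqb s0 w then phi s0 else 0)
                                  + (if Nat.eqb s1 w then - phi s1 else 0))).
    + rewrite sumR_plus, !sumR_single by auto. ring.
    + intros w Hw. unfold supply.
      destruct (Nat.eqb_spec w s0), (Nat.eqb_spec s0 w), (Nat.eqb_spec w s1), (Nat.eqb_spec s1 w);
        subst; try lia; lra.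
Qed.

Lemma current_downhill ends (L : nat -> R) De (pt : nat -> R) e :
  De > 0 -> L e > 0 -> downhill pt (fst (ends e)) (snd (ends e)) (current ends L De pt e).
Proof.
  intros HD HL. unfold current.
  assert (Hc : De / L e > 0) by (apply Rdiv_lt_0_compat; lra).
  replace (De * (pt (fst (ends e)) - pt (snd (ends e))) / L e)
    with ((pt (fst (ends e)) - pt (snd (ends e))) * (De / L e)) by (unfold Rdiv; ring).
  split; intros H; nra.
Qed.

Definition cut (h pi : nat -> R) (theta : R) (w : nat) : R :=
  if Rlt_dec 0 (h w) then if Rle_dec theta (pi w) then 1 else 0 else 0.

Lemma cut_detects_flow h pi u v q :
  downhill pi u v q -> (0 < q /\ 0 < h u) \/ (q < 0 /\ 0 < h v) ->
  exists theta, q * (cut h pi theta u - cut h pi theta v) = Rabs q.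
Proof.
  intros [Hdp Hdn] [[Hq Hh]|[Hq Hh]]; unfold cut.
  - exists (pi u). specialize (Hdp Hq). rewrite Rabs_right by lra.
    destruct (Rlt_dec 0 (h u)), (Rle_dec (pi u) (pi u)), (Rlt_dec 0 (h v)),
      (Rle_dec (pi u) (pi v)); lra.
  - exists (pi v). specialize (Hdn Hq). rewrite Rabs_left by lra.
    destruct (Rlt_dec 0 (h v)), (Rle_dec (pi v) (pi v)), (Rlt_dec 0 (h u)),
      (Rle_dec (pi v) (pi u)); lra.
Qed.

Lemma cut_term_nonneg h pi u v q theta :
  downhill pi u v q -> 0 < h u -> 0 < h v ->
  0 <= q * (cut h pi theta u - cut h pi theta v).
Proof.
  intros [Hdp Hdn] Hu Hv. unfold cut.
  destruct (Rlt_dec 0 (h u)); [|lra]. destruct (Rlt_dec 0 (h v)); [|lra].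
  destruct (Rtotal_order q 0) as [Hq|[Hq|Hq]];
    [specialize (Hdn Hq) | subst; lra | specialize (Hdp Hq)];
    destruct (Rle_dec theta (pi u)), (Rle_dec theta (pi v)); nra.
Qed.

Lemma downhill_unit_flow_le_1 m ends s0 s1 q pi :
  unit_flow m ends s0 s1 q ->
  (forall e, (e < m)%nat -> downhill pi (fst (ends e)) (snd (ends e)) (q e)) ->
  forall e0, (e0 < m)%nat -> Rabs (q e0) <= 1.
Proof.
  intros Hq Hdown e0 He0. set (one := fun _ : nat => 1).
  destruct (Req_dec (q e0) 0) as [H0|H0]; [rewrite H0, Rabs_R0; lra|].
  destruct (cut_detects_flow one pi _ _ (q e0) (Hdown e0 He0)) as [theta Htheta].
  { unfold one; destruct (Rtotal_order (q e0) 0) as [?|[?|?]]; [right|lra|left]; split; lra. }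
  rewrite <- Htheta.
  eapply Rle_trans; [apply (sumR_ge_term m (fun e =>
      q e * (cut one pi theta (fst (ends e)) - cut one pi theta (snd (ends e))))); auto|].
  - intros e He. apply cut_term_nonneg; auto; unfold one; lra.
  - rewrite Hq. unfold cut, one.
    destruct (Rlt_dec 0 1), (Rle_dec theta (pi s0)), (Rle_dec theta (pi s1)); lra.
Qed.

(** A downhill unit flow through an edge off all shortest paths costs more than [Ls]. *)

Lemma balanced_sum_bound m (f tau : nat -> R) delta e0 :
  sumR m f = 0 -> (forall e, (e < m)%nat -> 0 <= tau e) ->
  (forall e, (e < m)%nat -> f e < 0 -> delta * (- f e) <= tau e) ->
  0 <= delta -> (e0 < m)%nat -> delta * f e0 <= sumR m tau.
Proof.
  intros Hf Htau Hneg Hd He0.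
  set (pos := fun e => Rmax 0 (f e)). set (neg := fun e => Rmax 0 (- f e)).
  assert (Hbudget : delta * sumR m neg <= sumR m tau).
  { rewrite <- sumR_scal. apply sumR_le; intros e He. unfold neg, Rmax.
    destruct (Rle_dec 0 (- f e)); [|rewrite Rmult_0_r; auto].
    destruct (Rlt_dec (f e) 0); [apply Hneg; auto|].
    replace (- f e) with 0 by lra. rewrite Rmult_0_r; auto. }
  assert (Hsplit : sumR m pos = sumR m neg).
  { assert (Hdiff : sumR m (fun e => pos e - neg e) = sumR m f).
    { apply sumR_ext; intros e _. unfold pos, neg, Rmax.
      destruct (Rle_dec 0 (f e)), (Rle_dec 0 (- f e)); lra. }
    rewrite sumR_minus in Hdiff. lra. }
  assert (pos e0 <= sumR m pos) by (apply sumR_ge_term; auto; intros; apply Rmax_l).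
  assert (f e0 <= pos e0) by apply Rmax_r.
  nra.
Qed.

Definition straddles (h : nat -> R) (u v : nat) : Prop :=
  (h u <= 0 /\ 0 < h v) \/ (0 < h u /\ h v <= 0).

Lemma cut_term_backward h pi u v q theta :
  downhill pi u v q -> q * (cut h pi theta u - cut h pi theta v) < 0 ->
  straddles h u v /\ q * (cut h pi theta u - cut h pi theta v) = - Rabs q.
Proof.
  intros [Hdp Hdn] Hneg. unfold straddles, cut in *.
  destruct (Rtotal_order q 0) as [Hq|[Hq|Hq]];
    [specialize (Hdn Hq); rewrite Rabs_left by lra | subst; lra
    | specialize (Hdp Hq); rewrite Rabs_right by lra];
    destruct (Rlt_dec 0 (h u)), (Rlt_dec 0 (h v)),
      (Rle_dec theta (pi u)), (Rle_dec theta (pi v)); split; try lra.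
Qed.

Lemma cut_bound m ends s0 s1 q pi h tau delta e0 :
  unit_flow m ends s0 s1 q ->
  (forall e, (e < m)%nat -> downhill pi (fst (ends e)) (snd (ends e)) (q e)) ->
  h s0 <= 0 -> h s1 <= 0 -> 0 <= delta ->
  (forall e, (e < m)%nat -> 0 <= tau e) ->
  (forall e, (e < m)%nat -> straddles h (fst (ends e)) (snd (ends e)) ->
     delta * Rabs (q e) <= tau e) ->
  (e0 < m)%nat ->
  (0 < q e0 /\ 0 < h (fst (ends e0))) \/ (q e0 < 0 /\ 0 < h (snd (ends e0))) ->
  delta * Rabs (q e0) <= sumR m tau.
Proof.
  intros Hq Hdown Hs0 Hs1 Hd Htau Hstr He0 Hup.
  destruct (cut_detects_flow h pi _ _ _ (Hdown e0 He0) Hup) as [theta Htheta].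
  rewrite <- Htheta.
  apply (balanced_sum_bound m
    (fun e => q e * (cut h pi theta (fst (ends e)) - cut h pi theta (snd (ends e))))); auto.
  - rewrite Hq. unfold cut.
    destruct (Rlt_dec 0 (h s0)), (Rlt_dec 0 (h s1)); lra.
  - intros e He Hneg.
    destruct (cut_term_backward h pi _ _ _ theta (Hdown e He) Hneg) as [Hs ->].
    rewrite Ropp_involutive. auto.
Qed.

Lemma min_positive (h : nat -> R) n :
  exists delta, delta > 0 /\ forall w, (w < n)%nat -> h w > 0 -> delta <= h w.
Proof.
  induction n as [|n [delta [Hdelta Hmin]]].
  - exists 1; split; [lra | intros; lia].
  - destruct (Rlt_dec 0 (h n)).
    + exists (Rmin delta (h n)); split; [apply Rmin_pos; lra|]. intros w Hw Hh.
      destruct (Nat.eq_dec w n) as [->|]; [apply Rmin_r|].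
      eapply Rle_trans; [apply Rmin_l | apply Hmin; auto; lia].
    + exists delta; split; auto. intros w Hw Hh.
      destruct (Nat.eq_dec w n) as [->|]; [lra | apply Hmin; auto; lia].
Qed.

(* The slack of an edge carrying [q]: [2 L |q|] minus the work [q ((d' u - d' v) - (d u - d v))]
   of [q] against the distance functions [d] (from [s0]) and [d'] (from [s1]);
   summed over a unit flow it equals twice its cost in excess of [Ls]. *)
Definition slack (q len du dv du' dv' : R) : R :=
  2 * len * Rabs q + q * (du - dv) - q * (du' - dv').

Section Slack.

Variables (q len du dv du' dv' Ls : R).
Hypothesis Hlip : Rabs (du - dv) <= len.
Hypothesis Hlip' : Rabs (du' - dv') <= len.

Lemma slack_nonneg : 0 <= slack q len du dv du' dv'.
Proof.
  unfold slack. apply Rabs_le_bounds in Hlip. apply Rabs_le_bounds in Hlip'.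
  destruct (Rle_dec 0 q); [rewrite Rabs_right by lra | rewrite Rabs_left by lra]; nra.
Qed.

Lemma slack_tight_endpoint :
  (du + du' = Ls -> Rabs q * (dv + dv' - Ls) <= slack q len du dv du' dv') /\
  (dv + dv' = Ls -> Rabs q * (du + du' - Ls) <= slack q len du dv du' dv').
Proof.
  unfold slack. apply Rabs_le_bounds in Hlip. apply Rabs_le_bounds in Hlip'.
  split; intros;
    (destruct (Rle_dec 0 q); [rewrite Rabs_right by lra | rewrite Rabs_left by lra]; nra).
Qed.

End Slack.

Lemma slack_both_tight q len du dv du' dv' Ls nu :
  du + du' = Ls -> dv + dv' = Ls ->
  nu <= du + len + dv' - Ls -> nu <= dv + len + du' - Ls ->
  2 * Rabs q * nu <= slack q len du dv du' dv'.
Proof.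
  intros. unfold slack.
  destruct (Rle_dec 0 q); [rewrite Rabs_right by lra | rewrite Rabs_left by lra]; nra.
Qed.

Section CostBound.

Variables (n m : nat) (ends : nat -> nat * nat) (L : nat -> R).
Variables (s0 s1 : nat) (d d' : nat -> R) (Ls : R).
Hypothesis Hends : forall e, (e < m)%nat -> (fst (ends e) < n)%nat /\ (snd (ends e) < n)%nat.
Hypothesis Hd_s0 : d s0 = 0.
Hypothesis Hd_s1 : d s1 = Ls.
Hypothesis Hd'_s0 : d' s0 = Ls.
Hypothesis Hd'_s1 : d' s1 = 0.
Hypothesis Hlip : forall e, (e < m)%nat -> Rabs (d (fst (ends e)) - d (snd (ends e))) <= L e.
Hypothesis Hlip' : forall e, (e < m)%nat -> Rabs (d' (fst (ends e)) - d' (snd (ends e))) <= L e.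
Hypothesis Hsum : forall w, (w < n)%nat -> Ls <= d w + d' w.

(* How far the best walk [s0 ~> w ~> s1] is from being shortest. *)
Definition excess (w : nat) : R := d w + d' w - Ls.

Definition edge_slack (q : nat -> R) (e : nat) : R :=
  slack (q e) (L e) (d (fst (ends e))) (d (snd (ends e))) (d' (fst (ends e))) (d' (snd (ends e))).

Lemma total_slack q :
  unit_flow m ends s0 s1 q ->
  sumR m (edge_slack q) = 2 * sumR m (fun e => L e * Rabs (q e)) - 2 * Ls.
Proof.
  intros Hq. unfold edge_slack, slack.
  rewrite sumR_minus, sumR_plus,
    (sumR_ext m (fun e => 2 * L e * Rabs (q e)) (fun e => 2 * (L e * Rabs (q e))))
    by (intros; ring).
  rewrite sumR_scal, (Hq d), (Hq d'). lra.
Qed.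

Lemma excess_nonneg w : (w < n)%nat -> 0 <= excess w.
Proof. intros Hw. specialize (Hsum w Hw). unfold excess; lra. Qed.

Lemma edge_slack_nonneg q e : (e < m)%nat -> 0 <= edge_slack q e.
Proof. intros He. apply slack_nonneg; auto. Qed.

Section Payments.

Variable delta : R.
Hypothesis Hdelta : delta > 0.
Hypothesis Hdelta_min : forall w, (w < n)%nat -> excess w > 0 -> delta <= excess w.

Lemma straddle_paid q e :
  (e < m)%nat -> straddles excess (fst (ends e)) (snd (ends e)) ->
  delta * Rabs (q e) <= edge_slack q e.
Proof.
  intros He Hs. destruct (Hends e He) as [Hu Hv].
  pose proof (excess_nonneg _ Hu); pose proof (excess_nonneg _ Hv); pose proof (Rabs_pos (q e)).
  destruct (slack_tight_endpoint (q e) (L e) (d (fst (ends e))) (d (snd (ends e)))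
              (d' (fst (ends e))) (d' (snd (ends e))) Ls (Hlip e He) (Hlip' e He)) as [T1 T2].
  unfold excess, edge_slack in *; destruct Hs as [[Hs_u Hs_v]|[Hs_u Hs_v]].
  - specialize (T1 ltac:(lra)). specialize (Hdelta_min _ Hv Hs_v). nra.
  - specialize (T2 ltac:(lra)). specialize (Hdelta_min _ Hu Hs_u). nra.
Qed.

(* An edge with an endpoint of positive excess is paid for at rate [delta]
   by the total slack: apply the cut argument to [q], or to the reversed flow
   [-q], according to which endpoint is upstream. *)
Lemma positive_excess_paid q pi e0 :
  unit_flow m ends s0 s1 q ->
  (forall e, (e < m)%nat -> downhill pi (fst (ends e)) (snd (ends e)) (q e)) ->
  (e0 < m)%nat -> 0 < excess (fst (ends e0)) \/ 0 < excess (snd (ends e0)) ->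
  delta * Rabs (q e0) <= sumR m (edge_slack q).
Proof.
  intros Hq Hdown He0 Hpos.
  assert (Hterminals : excess s0 <= 0 /\ excess s1 <= 0) by (unfold excess; lra).
  assert (Hforward : (0 < q e0 /\ 0 < excess (fst (ends e0))) \/
                     (q e0 < 0 /\ 0 < excess (snd (ends e0))) ->
                     delta * Rabs (q e0) <= sumR m (edge_slack q)).
  { intros Hup. apply (cut_bound m ends s0 s1 q pi excess (edge_slack q) delta e0);
      auto using edge_slack_nonneg, straddle_paid; tauto || lra. }
  assert (Hbackward : (q e0 < 0 /\ 0 < excess (fst (ends e0))) \/
                      (0 < q e0 /\ 0 < excess (snd (ends e0))) ->
                      delta * Rabs (q e0) <= sumR m (edge_slack q)).
  { intros Hup. rewrite <- Rabs_Ropp.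
    apply (cut_bound m ends s1 s0 (fun e => - q e) (fun w => - pi w) excess
             (edge_slack q) delta e0); auto using unit_flow_reverse, edge_slack_nonneg.
    - intros e He; apply downhill_opp; auto.
    - tauto.
    - tauto.
    - lra.
    - intros e He Hs; rewrite Rabs_Ropp; apply straddle_paid; auto.
    - destruct Hup as [[? ?]|[? ?]]; [left|right]; split; auto; lra. }
  destruct (Rtotal_order (q e0) 0) as [Hneg|[Hzero|Hposq]].
  - destruct Hpos; [apply Hbackward | apply Hforward]; tauto.
  - rewrite Hzero, Rabs_R0, Rmult_0_r. apply sumR_nonneg; intros; apply edge_slack_nonneg; auto.
  - destruct Hpos; [apply Hforward | apply Hbackward]; tauto.
Qed.

End Payments.

Lemma tight_edge_paid q e0 nu :
  (e0 < m)%nat -> excess (fst (ends e0)) <= 0 -> excess (snd (ends e0)) <= 0 ->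
  nu <= d (fst (ends e0)) + L e0 + d' (snd (ends e0)) - Ls ->
  nu <= d (snd (ends e0)) + L e0 + d' (fst (ends e0)) - Ls ->
  2 * Rabs (q e0) * nu <= sumR m (edge_slack q).
Proof.
  intros He0 Hu Hv Hnu1 Hnu2. destruct (Hends e0 He0) as [Hu0 Hv0].
  pose proof (excess_nonneg _ Hu0); pose proof (excess_nonneg _ Hv0).
  apply Rle_trans with (edge_slack q e0).
  - apply (slack_both_tight _ _ _ _ _ _ Ls); unfold excess in *; lra.
  - apply sumR_ge_term; auto using edge_slack_nonneg.
Qed.

Lemma cost_bound e0 :
  (e0 < m)%nat ->
  Ls < d (fst (ends e0)) + L e0 + d' (snd (ends e0)) ->
  Ls < d (snd (ends e0)) + L e0 + d' (fst (ends e0)) ->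
  exists kappa, kappa > 0 /\
    forall q pi, unit_flow m ends s0 s1 q ->
      (forall e, (e < m)%nat -> downhill pi (fst (ends e)) (snd (ends e)) (q e)) ->
      Ls + kappa * Rabs (q e0) <= sumR m (fun e => L e * Rabs (q e)).
Proof.
  intros He0 Hgap1 Hgap2.
  destruct (min_positive excess n) as (delta & Hdelta & Hmin).
  set (nu := Rmin (d (fst (ends e0)) + L e0 + d' (snd (ends e0)) - Ls)
                  (d (snd (ends e0)) + L e0 + d' (fst (ends e0)) - Ls)).
  assert (Hnu : nu > 0) by (apply Rmin_pos; lra).
  pose proof (Rmin_l delta nu); pose proof (Rmin_r delta nu).
  exists (Rmin delta nu / 2); split; [pose proof (Rmin_pos delta nu); lra|].
  intros q pi Hq Hdown. pose proof (total_slack q Hq) as Htotal.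
  pose proof (Rabs_pos (q e0)).
  destruct (Rlt_le_dec 0 (excess (fst (ends e0)))) as [Hu|Hu];
    [|destruct (Rlt_le_dec 0 (excess (snd (ends e0)))) as [Hv|Hv]].
  1-2: pose proof (positive_excess_paid delta Hdelta Hmin q pi e0 Hq Hdown He0 ltac:(tauto)); nra.
  pose proof (tight_edge_paid q e0 nu He0 Hu Hv (Rmin_l _ _) (Rmin_r _ _)); nra.
Qed.

End CostBound.

Lemma off_shortest_path_cost n m ends L s0 s1 e0 :
  simple_graph n m ends -> connected n m ends -> (forall e, (e < m)%nat -> L e > 0) ->
  (s0 < n)%nat -> (s1 < n)%nat -> (e0 < m)%nat -> ~ on_shortest_path m ends L s0 s1 e0 ->
  exists P Ls kappa,
    path m ends s0 s1 P /\ path_length L P = Ls /\ kappa > 0 /\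
    forall q pi, unit_flow m ends s0 s1 q ->
      (forall e, (e < m)%nat -> downhill pi (fst (ends e)) (snd (ends e)) (q e)) ->
      Ls + kappa * Rabs (q e0) <= sumR m (fun e => L e * Rabs (q e)).
Proof.
  intros Hs Hc HL Hs0 Hs1 He0 Hoff.
  destruct (distance_function n m ends L Hs Hc HL s0 Hs0) as [d Hd].
  destruct (distance_function n m ends L Hs Hc HL s1 Hs1) as [d' Hd'].
  assert (Hends : forall e, (e < m)%nat -> (fst (ends e) < n)%nat /\ (snd (ends e) < n)%nat)
    by (intros e He; destruct (proj1 Hs e He) as (? & ? & _); auto).
  assert (J : joins ends e0 (fst (ends e0)) (snd (ends e0))) by (left; destruct (ends e0); auto).
  destruct (Hends e0 He0) as [Hu0 Hv0].
  pose proof (Hd s1 Hs1) as Hdist. destruct (proj1 Hdist) as (P & HP & HPl).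
  destruct (cost_bound n m ends L s0 s1 d d' (d s1) Hends
              (is_distance_self m ends L HL _ _ (Hd s0 Hs0)) eq_refl
              (is_distance_sym m ends L _ _ _ _ (Hd' s0 Hs0) Hdist)
              (is_distance_self m ends L HL _ _ (Hd' s1 Hs1))
              (distance_lipschitz n m ends L Hs HL s0 d Hd)
              (distance_lipschitz n m ends L Hs HL s1 d' Hd')
              (fun w Hw => distance_sum_ge m ends L HL s0 s1 w _ _ _ (Hd w Hw) (Hd' w Hw) Hdist)
              e0 He0) as (kappa & Hkappa & Hcost).
  - exact (distance_through_edge m ends L HL s0 s1 e0 _ _ _ _ _ He0 J Hoff
             (Hd _ Hu0) (Hd' _ Hv0) Hdist).
  - exact (distance_through_edge m ends L HL s0 s1 e0 _ _ _ _ _ He0 (joins_sym ends _ _ _ J) Hoff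
             (Hd _ Hv0) (Hd' _ Hu0) Hdist).
  - exists P, (d s1), kappa; auto.
Qed.

(** Edge-wise identities for the current and the dissipation inequality. *)

Lemma walk_potential_drop m ends (pt : nat -> R) a c vs es :
  walk m ends a c vs es ->
  pt a - pt c <= lsum (fun e => Rabs (pt (fst (ends e)) - pt (snd (ends e)))) es.
Proof.
  induction 1 as [a|a b c e vs es He Hj W IH]; simpl; [lra|].
  assert (pt a - pt b <= Rabs (pt (fst (ends e)) - pt (snd (ends e)))).
  { destruct Hj as [E|E]; rewrite E; simpl; [|rewrite Rabs_minus_sym]; apply Rle_abs. }
  lra.
Qed.

Section CurrentOnEdge.

(* An edge of length [len > 0] and diameter [De > 0] with potential drop [x]
   carries the current [De * x / len]. *)
Variables (De len x : R).
Hypothesis HDe : De > 0.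
Hypothesis Hlen : len > 0.

Lemma current_power : De * x / len * x = De / len * (x * x).
Proof. field; lra. Qed.

Lemma current_amgm : len * Rabs (De * x / len) <= (De * x / len * x + len * De) / 2.
Proof.
  rewrite current_power. unfold Rdiv.
  rewrite !Rabs_mult, (Rabs_right De), (Rabs_right (/ len)) by (apply Rle_ge;
    try apply Rlt_le, Rinv_0_lt_compat; lra).
  assert (Hsq : x * x = Rabs x * Rabs x) by (rewrite <- Rabs_mult, Rabs_right; nra).
  rewrite Hsq.
  assert (0 <= De * / len * ((Rabs x - len) * (Rabs x - len)))
    by (apply Rmult_le_pos; [apply Rmult_le_pos; [lra | apply Rlt_le, Rinv_0_lt_compat; lra]
                            | apply Rle_0_sqr]).
  replace (len * (De * Rabs x * / len)) with (De * Rabs x) by (field; lra).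
  replace ((De * / len * (Rabs x * Rabs x) + len * De) * / 2)
    with (De * Rabs x + / 2 * (De * / len * ((Rabs x - len) * (Rabs x - len)))) by (field; lra).
  lra.
Qed.

Lemma current_sq : De * x / len * (De * x / len) = De / len * (De * x / len * x).
Proof. field; lra. Qed.

Lemma current_drop_bound : Rabs (De * x / len) <= 1 -> Rabs x <= len / De.
Proof.
  intros Hq. unfold Rdiv in *.
  rewrite !Rabs_mult, (Rabs_right De), (Rabs_right (/ len)) in Hq by (apply Rle_ge;
    try apply Rlt_le, Rinv_0_lt_compat; lra).
  apply (Rmult_le_reg_l (De * / len)); [apply Rmult_lt_0_compat; [|apply Rinv_0_lt_compat]; lra|].
  replace (De * / len * (len * / De)) with 1 by (field; lra). lra.
Qed.

Lemma current_relative_rate :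
  len * ((Rabs (De * x / len) - De) / De) = Rabs x - len.
Proof.
  unfold Rdiv. rewrite !Rabs_mult, (Rabs_right De), (Rabs_right (/ len)) by (apply Rle_ge;
    try apply Rlt_le, Rinv_0_lt_compat; lra).
  field; lra.
Qed.

End CurrentOnEdge.

Lemma current_energy n m ends L s0 s1 (Dt pt : nat -> R) :
  simple_graph n m ends -> (s0 < n)%nat -> (s1 < n)%nat -> s0 <> s1 ->
  potentials n m ends L s0 s1 Dt pt ->
  sumR m (fun e => current ends L (Dt e) pt e * (pt (fst (ends e)) - pt (snd (ends e)))) = pt s0.
Proof.
  intros Hs Hs0 Hs1 Hs01 Hpot.
  rewrite (current_unit_flow n m ends L s0 s1 Dt pt Hs Hs0 Hs1 Hs01 Hpot pt), (proj1 Hpot); ring.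
Qed.

(* Static form of the Lyapunov inequality: if the current costs at least
   [Ls + kappa |Q e0|], then with [P] a path of length [Ls],
     sum_e L_e (|Q_e| - D_e) - sum_(e in P) L_e (|Q_e| - D_e) / D_e <= - kappa |Q e0|. *)
Lemma dissipation_inequality n m ends L s0 s1 P Ls kappa e0 (Dt pt : nat -> R) :
  simple_graph n m ends -> (s0 < n)%nat -> (s1 < n)%nat -> s0 <> s1 ->
  (forall e, (e < m)%nat -> L e > 0) -> (forall e, (e < m)%nat -> Dt e > 0) ->
  potentials n m ends L s0 s1 Dt pt ->
  path m ends s0 s1 P -> path_length L P = Ls ->
  Ls + kappa * Rabs (current ends L (Dt e0) pt e0) <=
    sumR m (fun e => L e * Rabs (current ends L (Dt e) pt e)) ->
  sumR m (fun e => L e * (Rabs (current ends L (Dt e) pt e) - Dt e))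
  - lsum (fun e => L e * ((Rabs (current ends L (Dt e) pt e) - Dt e) / Dt e)) P
  <= - kappa * Rabs (current ends L (Dt e0) pt e0).
Proof.
  intros Hs Hs0 Hs1 Hs01 HL HD Hpot [vs [W _]] HPl Hcost.
  set (drop := fun e => pt (fst (ends e)) - pt (snd (ends e))).
  assert (Hpath : lsum (fun e => L e * ((Rabs (current ends L (Dt e) pt e) - Dt e) / Dt e)) P
                  = lsum (fun e => Rabs (drop e)) P - Ls).
  { rewrite (lsum_ext _ (fun e => Rabs (drop e) - L e)), lsum_minus, <- HPl; [reflexivity|].
    intros e He. assert (He' : (e < m)%nat) by (eapply walk_edges; eauto).
    apply current_relative_rate; auto. }
  assert (Hamgm : sumR m (fun e => L e * Rabs (current ends L (Dt e) pt e))
                  <= (pt s0 + sumR m (fun e => L e * Dt e)) / 2).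
  { rewrite <- (current_energy n m ends L s0 s1 Dt pt), <- sumR_plus by auto.
    apply Rle_trans with (sumR m (fun e => / 2 *
      (current ends L (Dt e) pt e * drop e + L e * Dt e))).
    - apply sumR_le; intros e He.
      pose proof (current_amgm (Dt e) (L e) (drop e) (HD e He) (HL e He)).
      unfold current, drop in *; lra.
    - rewrite sumR_scal; unfold drop; lra. }
  pose proof (walk_potential_drop m ends pt s0 s1 vs P W) as Hdrop.
  rewrite (proj1 Hpot) in Hdrop.
  rewrite (sumR_ext m _ (fun e => L e * Rabs (current ends L (Dt e) pt e) - L e * Dt e))
    by (intros; ring).
  rewrite sumR_minus, Hpath. unfold drop; cbv beta. lra.
Qed.

(** Real analysis: monotonicity, Lipschitz bounds and a Barbalat-type lemma. *)

Lemma ln_le_compat x y : 0 < x -> x <= y -> ln x <= ln y.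
Proof.
  intros Hx Hxy. destruct (Req_dec x y) as [->|]; [lra | left; apply ln_increasing; lra].
Qed.

Lemma exp_le_compat x y : x <= y -> exp x <= exp y.
Proof. intros Hxy. destruct (Req_dec x y) as [->|]; [lra | left; apply exp_increasing; lra]. Qed.

Lemma nonincreasing_of_deriv f f' a b :
  a <= b -> (forall c, a <= c <= b -> derivable_pt_lim f c (f' c)) ->
  (forall c, a <= c <= b -> f' c <= 0) -> f b <= f a.
Proof.
  intros Hab Hd Hneg. destruct (Req_dec a b) as [->|Hne]; [lra|].
  destruct (MVT_cor2 f f' a b ltac:(lra) Hd) as (c & Hc & Hrange).
  specialize (Hneg c ltac:(lra)). nra.
Qed.

Lemma nondecreasing_of_deriv f f' a b :
  a <= b -> (forall c, a <= c <= b -> derivable_pt_lim f c (f' c)) ->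
  (forall c, a <= c <= b -> 0 <= f' c) -> f a <= f b.
Proof.
  intros Hab Hd Hpos. destruct (Req_dec a b) as [->|Hne]; [lra|].
  destruct (MVT_cor2 f f' a b ltac:(lra) Hd) as (c & Hc & Hrange).
  specialize (Hpos c ltac:(lra)). nra.
Qed.

Lemma lipschitz_of_deriv f f' a Lam :
  (forall c, a <= c -> derivable_pt_lim f c (f' c)) -> (forall c, a <= c -> Rabs (f' c) <= Lam) ->
  forall s t, a <= s -> a <= t -> Rabs (f s - f t) <= Lam * Rabs (s - t).
Proof.
  intros Hd Hb.
  assert (Hlt : forall s t, a <= s -> s < t -> Rabs (f s - f t) <= Lam * Rabs (s - t)).
  { intros s t Hs Hst. destruct (MVT_cor2 f f' s t Hst) as (c & Hc & Hrange);
      [intros; apply Hd; lra|].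
    rewrite Rabs_minus_sym, Hc, (Rabs_minus_sym s t), Rabs_mult.
    apply Rmult_le_compat_r; [apply Rabs_pos | apply Hb; lra]. }
  intros s t Hs Ht. destruct (Rtotal_order s t) as [?|[->|?]].
  - apply Hlt; auto.
  - rewrite !Rminus_diag, Rabs_R0. pose proof (Rle_trans _ _ _ (Rabs_pos (f' t)) (Hb t Ht)). lra.
  - rewrite Rabs_minus_sym, (Rabs_minus_sym s t). apply Hlt; auto.
Qed.

(* Barbalat-type lemma: if [f] is bounded below and decreases at rate at
   least [k g] with [g >= 0] Lipschitz, then [g] tends to 0.  Otherwise
   [g >= eps] at arbitrarily late times, hence [g >= eps/2] on intervals of
   fixed length after them, on each of which [f] drops by a fixed amount. *)
Lemma dissipation_vanishes (f f' g : R -> R) a k B Lam :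
  k > 0 -> Lam > 0 ->
  (forall t, a <= t -> derivable_pt_lim f t (f' t)) ->
  (forall t, a <= t -> f' t <= - k * g t) ->
  (forall t, a <= t -> 0 <= g t) ->
  (forall t, a <= t -> B <= f t) ->
  (forall s t, a <= s -> a <= t -> Rabs (g s - g t) <= Lam * Rabs (s - t)) ->
  forall eps, eps > 0 -> exists T, forall t, t >= T -> g t < eps.
Proof.
  intros Hk HLam Hd Hf' Hg HB Hlip eps Heps.
  apply NNPP; intros Hno.
  assert (Hlate : forall T, exists t, t >= T /\ g t >= eps).
  { intros T. apply NNPP; intros H. apply Hno. exists T; intros t Ht.
    apply Rnot_le_lt; intros H2. apply H. exists t; split; auto; lra. }
  set (delta := eps / (2 * Lam)).
  assert (Hdelta : delta > 0) by (unfold delta; apply Rdiv_lt_0_compat; lra).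
  set (eta := k * (eps / 2) * delta).
  assert (Heta : eta > 0) by (unfold eta; apply Rmult_lt_0_compat; [apply Rmult_lt_0_compat|]; lra).
  assert (Hmono : forall s t, a <= s <= t -> f t <= f s).
  { intros s t Hst. apply (nonincreasing_of_deriv f f'); [lra | intros; apply Hd; lra|].
    intros c Hc. specialize (Hf' c ltac:(lra)). specialize (Hg c ltac:(lra)). nra. }
  (* one late excursion of [g] above [eps] costs [f] at least [eta] *)
  assert (Hdrop : forall t, a <= t -> g t >= eps -> f (t + delta) <= f t - eta).
  { intros t Ht Hgt.
    destruct (MVT_cor2 f f' t (t + delta) ltac:(lra)) as (c & Hc & Hrange);
      [intros; apply Hd; lra|].
    assert (Hgc : g c >= eps / 2).
    { specialize (Hlip c t ltac:(lra) ltac:(lra)).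
      rewrite (Rabs_right (c - t)) in Hlip by lra. apply Rabs_le_bounds in Hlip.
      assert (Lam * (c - t) <= Lam * delta) by (apply Rmult_le_compat_l; lra).
      assert (Lam * delta = eps / 2) by (unfold delta; field; lra). lra. }
    specialize (Hf' c ltac:(lra)).
    assert (f' c <= - k * (eps / 2)) by nra.
    assert (f' c * delta <= - eta) by (unfold eta; nra).
    replace (t + delta - t) with delta in Hc by ring. lra. }
  assert (Hsteps : forall N : nat, exists t, a <= t /\ f t <= f a - INR N * eta).
  { induction N as [|N [tN [HtN HfN]]].
    - exists a; simpl; split; lra.
    - destruct (Hlate (Rmax tN a)) as [t [Ht Hgt]].
      pose proof (Rmax_l tN a); pose proof (Rmax_r tN a).
      exists (t + delta); split; [lra|].
      specialize (Hdrop t ltac:(lra) Hgt). specialize (Hmono tN t ltac:(lra)).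
      rewrite S_INR; lra. }
  destruct (INR_archimed eta (f a - B) Heta) as [N HN].
  destruct (Hsteps N) as [t [Ht Hft]]. specialize (HB t Ht). lra.
Qed.

Lemma derivable_pt_lim_sumR m (F F' : nat -> R -> R) t :
  (forall e, (e < m)%nat -> derivable_pt_lim (F e) t (F' e t)) ->
  derivable_pt_lim (fun s => sumR m (fun e => F e s)) t (sumR m (fun e => F' e t)).
Proof.
  revert F F'; induction m as [|m IH]; intros F F' H; simpl.
  - apply (derivable_pt_lim_const 0).
  - apply (derivable_pt_lim_plus (fun s => sumR m (fun e => F e s)) (F m));
      [apply IH; intros; apply H | apply H]; lia.
Qed.

Lemma derivable_pt_lim_lsum l (F F' : nat -> R -> R) t :
  (forall e, In e l -> derivable_pt_lim (F e) t (F' e t)) ->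
  derivable_pt_lim (fun s => lsum (fun e => F e s) l) t (lsum (fun e => F' e t) l).
Proof.
  revert F F'; induction l as [|a l IH]; intros F F' H; simpl.
  - apply (derivable_pt_lim_const 0).
  - apply (derivable_pt_lim_plus (F a) (fun s => lsum (fun e => F e s) l));
      [apply H | apply IH; intros; apply H]; simpl; auto.
Qed.

Lemma derivable_pt_lim_ln_comp (f : R -> R) t l :
  f t > 0 -> derivable_pt_lim f t l -> derivable_pt_lim (fun s => ln (f s)) t (l / f t).
Proof.
  intros Hpos H.
  pose proof (derivable_pt_lim_comp f ln t l (/ f t) H (derivable_pt_lim_ln (f t) Hpos)) as Hc.
  unfold comp in Hc. replace (l / f t) with (/ f t * l) by (unfold Rdiv; ring). exact Hc.
Qed.

(* For the linear equation [f' = g - f], the sign of [(f - c) e^t]'s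
   derivative is that of [g - c]. *)
Lemma derivable_pt_lim_shifted_exp (f : R -> R) t l c :
  derivable_pt_lim f t l ->
  derivable_pt_lim (fun s => (f s - c) * exp s) t ((l + (f t - c)) * exp t).
Proof.
  intros H. replace ((l + (f t - c)) * exp t) with (l * exp t + (f t - c) * exp t) by ring.
  apply (derivable_pt_lim_mult (fun s => f s - c) exp t l (exp t)).
  - replace l with (l - 0) by ring.
    apply (derivable_pt_lim_minus f (fct_cte c)); auto. apply derivable_pt_lim_const.
  - apply derivable_pt_lim_exp.
Qed.

(** Trajectories of the Physarum dynamics. *)

Section Trajectory.

Variables (n m : nat) (ends : nat -> nat * nat) (s0 s1 : nat) (L : nat -> R).
Variables (D : nat -> R -> R) (p : R -> nat -> R).
Hypothesis Hsimple : simple_graph n m ends.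
Hypothesis Hs0 : (s0 < n)%nat.
Hypothesis Hs1 : (s1 < n)%nat.
Hypothesis Hs01 : s0 <> s1.
Hypothesis HL : forall e, (e < m)%nat -> L e > 0.
Hypothesis HD0 : forall e, (e < m)%nat -> D e 0 > 0.
Hypothesis Hcont0 : forall e, (e < m)%nat -> forall eps, eps > 0 ->
  exists delta, delta > 0 /\ forall t, 0 <= t < delta -> Rabs (D e t - D e 0) < eps.
Hypothesis Hpot : forall t, t >= 0 -> potentials n m ends L s0 s1 (fun e => D e t) (p t).
Hypothesis Hdyn : forall e, (e < m)%nat -> forall t, t > 0 ->
  derivable_pt_lim (D e) t (Rabs (current ends L (D e t) (p t) e) - D e t).

Let Q (t : R) (e : nat) : R := current ends L (D e t) (p t) e.

(* Diameters stay positive: [D e^t] is nondecreasing, and [D > 0] shortly after 0. *)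
Lemma diameter_pos e t : (e < m)%nat -> t > 0 -> D e t > 0.
Proof.
  intros He Ht. pose proof (HD0 e He) as HDe0.
  destruct (Hcont0 e He (D e 0 / 2) ltac:(lra)) as (delta & Hdelta & Hnear).
  pose proof (Rmin_l (delta / 2) (t / 2)); pose proof (Rmin_r (delta / 2) (t / 2)).
  set (s := Rmin (delta / 2) (t / 2)) in *.
  assert (Hs : 0 < s) by (apply Rmin_pos; lra).
  specialize (Hnear s ltac:(lra)). apply Rlt_le, Rabs_le_bounds in Hnear.
  assert (Hmono : (D e s - 0) * exp s <= (D e t - 0) * exp t).
  { apply (nondecreasing_of_deriv (fun x => (D e x - 0) * exp x)
             (fun x => (Rabs (Q x e) - 0) * exp x)); [lra| |].
    - intros c Hc. replace (Rabs (Q c e) - 0) with (Rabs (Q c e) - D e c + (D e c - 0)) by ring.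
      apply derivable_pt_lim_shifted_exp, Hdyn; auto; lra.
    - intros c Hc. pose proof (exp_pos c); pose proof (Rabs_pos (Q c e)). nra. }
  pose proof (exp_pos s); pose proof (exp_pos t).
  assert (0 < (D e s - 0) * exp s) by (apply Rmult_lt_0_compat; lra). nra.
Qed.

Lemma current_le_1 e t : (e < m)%nat -> t > 0 -> Rabs (Q t e) <= 1.
Proof.
  intros He Ht. pose proof (Hpot t ltac:(lra)) as Hp.
  apply (downhill_unit_flow_le_1 m ends s0 s1 (Q t) (p t)); auto.
  - apply (current_unit_flow n m ends L s0 s1 (fun e => D e t) (p t)); auto.
  - intros e' He'. apply current_downhill; auto using diameter_pos.
Qed.

Definition diameter_bound (e : nat) : R := Rmax (D e 1) 1.

(* Since [|Q| <= 1], [(D - 1) e^t] is nonincreasing, so diameters stay bounded. *)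
Lemma diameter_le_bound e t : (e < m)%nat -> t >= 1 -> D e t <= diameter_bound e.
Proof.
  intros He Ht. unfold diameter_bound.
  pose proof (Rmax_l (D e 1) 1); pose proof (Rmax_r (D e 1) 1).
  assert (Hmono : (D e t - 1) * exp t <= (D e 1 - 1) * exp 1).
  { apply (nonincreasing_of_deriv (fun x => (D e x - 1) * exp x)
             (fun x => (Rabs (Q x e) - 1) * exp x)); [lra| |].
    - intros c Hc. replace (Rabs (Q c e) - 1) with (Rabs (Q c e) - D e c + (D e c - 1)) by ring.
      apply derivable_pt_lim_shifted_exp, Hdyn; auto; lra.
    - intros c Hc. pose proof (exp_pos c); pose proof (current_le_1 e c He ltac:(lra)). nra. }
  destruct (Rle_dec (D e t) 1); [lra|].
  assert (exp 1 <= exp t) by (apply exp_le_compat; lra).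
  assert ((D e t - 1) * exp 1 <= (D e t - 1) * exp t) by (apply Rmult_le_compat_l; lra).
  pose proof (exp_pos 1). nra.
Qed.

(* From time 1 on, [|D'| <= 1 + diameter_bound], so [D] is Lipschitz. *)
Lemma diameter_lipschitz e : (e < m)%nat ->
  forall s t, 1 <= s -> 1 <= t -> Rabs (D e s - D e t) <= (1 + diameter_bound e) * Rabs (s - t).
Proof.
  intros He. apply (lipschitz_of_deriv (D e) (fun c => Rabs (Q c e) - D e c)).
  - intros c Hc. apply Hdyn; auto; lra.
  - intros c Hc. pose proof (diameter_pos e c He ltac:(lra)).
    pose proof (diameter_le_bound e c He ltac:(lra)).
    pose proof (current_le_1 e c He ltac:(lra)); pose proof (Rabs_pos (Q c e)).
    apply Rabs_le; lra.
Qed.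

Variables (e0 : nat) (P : list nat) (Ls kappa : R).
Hypothesis He0 : (e0 < m)%nat.
Hypothesis HP : path m ends s0 s1 P.
Hypothesis HPl : path_length L P = Ls.
Hypothesis Hkappa : kappa > 0.
Hypothesis Hcost : forall q pi, unit_flow m ends s0 s1 q ->
  (forall e, (e < m)%nat -> downhill pi (fst (ends e)) (snd (ends e)) (q e)) ->
  Ls + kappa * Rabs (q e0) <= sumR m (fun e => L e * Rabs (q e)).

Lemma path_edges e : In e P -> (e < m)%nat.
Proof. destruct HP as (vs & W & _). eapply walk_edges; eauto. Qed.

Definition lyapunov (t : R) : R :=
  sumR m (fun e => L e * D e t) - lsum (fun e => L e * ln (D e t)) P.

Definition lyapunov_rate (t : R) : R :=
  sumR m (fun e => L e * (Rabs (Q t e) - D e t))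
  - lsum (fun e => L e * ((Rabs (Q t e) - D e t) / D e t)) P.

Lemma lyapunov_deriv t : t > 0 -> derivable_pt_lim lyapunov t (lyapunov_rate t).
Proof.
  intros Ht. apply derivable_pt_lim_minus.
  - apply (derivable_pt_lim_sumR m (fun e s => L e * D e s)
             (fun e t => L e * (Rabs (Q t e) - D e t))).
    intros e He. apply derivable_pt_lim_scal, Hdyn; auto.
  - apply (derivable_pt_lim_lsum P (fun e s => L e * ln (D e s))
             (fun e t => L e * ((Rabs (Q t e) - D e t) / D e t))).
    intros e He. apply derivable_pt_lim_scal, derivable_pt_lim_ln_comp;
      [apply diameter_pos | apply Hdyn]; auto using path_edges.
Qed.

Lemma lyapunov_rate_le t : t > 0 -> lyapunov_rate t <= - kappa * Rabs (Q t e0).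
Proof.
  intros Ht. pose proof (Hpot t ltac:(lra)) as Hp.
  assert (HD : forall e, (e < m)%nat -> D e t > 0) by (intros; apply diameter_pos; auto).
  apply (dissipation_inequality n m ends L s0 s1 P Ls kappa e0 (fun e => D e t) (p t)); auto.
  apply (Hcost (Q t) (p t)).
  - apply (current_unit_flow n m ends L s0 s1 (fun e => D e t) (p t)); auto.
  - intros e He. apply current_downhill; auto.
Qed.

Lemma lyapunov_nonincreasing s t : 1 <= s <= t -> lyapunov t <= lyapunov s.
Proof.
  intros Hst. apply (nonincreasing_of_deriv lyapunov lyapunov_rate); [lra | |].
  - intros c Hc; apply lyapunov_deriv; lra.
  - intros c Hc. pose proof (lyapunov_rate_le c ltac:(lra)); pose proof (Rabs_pos (Q c e0)). nra.
Qed.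

Lemma path_log_diameters_le t : t >= 1 ->
  lsum (fun e => L e * ln (D e t)) P <= lsum (fun e => L e * ln (diameter_bound e)) P.
Proof.
  intros Ht. apply lsum_le; intros e He; cbv beta. pose proof (path_edges e He) as He'.
  apply Rmult_le_compat_l; [left; apply HL; auto|].
  pose proof (diameter_pos e t He' ltac:(lra)); pose proof (diameter_le_bound e t He' Ht).
  apply ln_le_compat; lra.
Qed.

Lemma lyapunov_lower_bound t : t >= 1 ->
  - lsum (fun e => L e * ln (diameter_bound e)) P <= lyapunov t.
Proof.
  intros Ht. pose proof (path_log_diameters_le t Ht). unfold lyapunov.
  assert (0 <= sumR m (fun e => L e * D e t)).
  { apply sumR_nonneg; intros e He.
    pose proof (HL e He); pose proof (diameter_pos e t He ltac:(lra)). nra. }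
  lra.
Qed.

(* First half of the theorem: the diameter of [e0] vanishes, by the
   Barbalat-type lemma applied to [lyapunov + kappa D_e0]. *)
Lemma diameter_vanishes : tends_to_0_at_infty (D e0).
Proof.
  assert (Hto0 : forall eps, eps > 0 -> exists T, forall t, t >= T -> D e0 t < eps).
  { apply (dissipation_vanishes (fun s => lyapunov s + kappa * D e0 s)
             (fun t => lyapunov_rate t + kappa * (Rabs (Q t e0) - D e0 t)) (D e0) 1 kappa
             (- lsum (fun e => L e * ln (diameter_bound e)) P) (1 + diameter_bound e0)); auto.
    - pose proof (Rmax_r (D e0 1) 1). unfold diameter_bound. lra.
    - intros t Ht. apply derivable_pt_lim_plus;
        [apply lyapunov_deriv | apply derivable_pt_lim_scal, Hdyn]; auto; lra.
    - intros t Ht. pose proof (lyapunov_rate_le t ltac:(lra)). lra.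
    - intros t Ht. pose proof (diameter_pos e0 t He0 ltac:(lra)). lra.
    - intros t Ht. pose proof (lyapunov_lower_bound t ltac:(lra)).
      pose proof (diameter_pos e0 t He0 ltac:(lra)). nra.
    - apply diameter_lipschitz; auto. }
  intros eps Heps. destruct (Hto0 eps Heps) as [T HT].
  exists (Rmax T 1); intros t Ht. pose proof (Rmax_l T 1); pose proof (Rmax_r T 1).
  rewrite Rabs_right by (left; apply diameter_pos; auto; lra). apply HT; lra.
Qed.

(* Since the Lyapunov function is nonincreasing, the diameters along [P]
   stay bounded away from 0. *)
Lemma path_diameters_lower_bound :
  exists K, forall e t, In e P -> t >= 1 -> exp (K / L e) <= D e t.
Proof.
  set (CW := lsum (fun e => L e * ln (diameter_bound e)) P).
  exists (- lyapunov 1 - CW). intros e t He Ht.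
  pose proof (path_edges e He) as He'. pose proof (HL e He') as HLe.
  pose proof (diameter_pos e t He' ltac:(lra)) as HDpos.
  assert (Hterm : lsum (fun e => L e * ln (D e t)) P - CW + L e * ln (diameter_bound e)
                  <= L e * ln (D e t)).
  { apply (lsum_term_lower_bound (fun e => L e * ln (D e t))
             (fun e => L e * ln (diameter_bound e))); auto.
    intros x Hx. apply Rmult_le_compat_l; [left; apply HL, path_edges; auto|].
    pose proof (path_edges x Hx) as Hx'.
    apply ln_le_compat; [apply diameter_pos | apply diameter_le_bound]; auto; lra. }
  assert (Hbound_log : 0 <= ln (diameter_bound e)).
  { rewrite <- ln_1. apply ln_le_compat; [lra | apply Rmax_r]. }
  assert (Hvolume : 0 <= sumR m (fun e => L e * D e t)).
  { apply sumR_nonneg; intros x Hx.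
    pose proof (HL x Hx); pose proof (diameter_pos x t Hx ltac:(lra)). nra. }
  pose proof (lyapunov_nonincreasing 1 t ltac:(lra)) as Hdecr. unfold lyapunov at 1 in Hdecr.
  rewrite <- (exp_ln (D e t)) by lra. apply exp_le_compat.
  apply (Rmult_le_reg_l (L e)); [lra|].
  replace (L e * ((- lyapunov 1 - CW) / L e)) with (- lyapunov 1 - CW) by (field; lra).
  nra.
Qed.

(* Hence the potential of the source, which is the energy of the flow, stays bounded. *)
Lemma source_potential_bound : exists C, forall t, t >= 1 -> p t s0 <= C.
Proof.
  destruct path_diameters_lower_bound as [K HK].
  exists (lsum (fun e => L e / exp (K / L e)) P). intros t Ht.
  destruct HP as (vs & W & _).
  pose proof (walk_potential_drop m ends (p t) s0 s1 vs P W) as Hdrop.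
  rewrite (proj1 (Hpot t ltac:(lra))), Rminus_0_r in Hdrop.
  eapply Rle_trans; [exact Hdrop|]. apply lsum_le; intros e He.
  pose proof (path_edges e He) as He'. pose proof (HL e He').
  pose proof (diameter_pos e t He' ltac:(lra)). pose proof (HK e t He Ht).
  pose proof (exp_pos (K / L e)).
  eapply Rle_trans; [apply current_drop_bound, (current_le_1 e t He'); lra|].
  unfold Rdiv; apply Rmult_le_compat_l; [lra|]. apply Rinv_le_contravar; lra.
Qed.

Lemma current_sq_bound t : t >= 1 -> Q t e0 * Q t e0 <= D e0 t / L e0 * p t s0.
Proof.
  intros Ht. pose proof (Hpot t ltac:(lra)) as Hp.
  pose proof (HL e0 He0); pose proof (diameter_pos e0 t He0 ltac:(lra)).
  assert (Hpower : forall e, (e < m)%nat ->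
            0 <= current ends L (D e t) (p t) e * (p t (fst (ends e)) - p t (snd (ends e)))).
  { intros e He. unfold current. rewrite current_power by auto using diameter_pos with real.
    pose proof (HL e He); pose proof (diameter_pos e t He ltac:(lra)).
    apply Rmult_le_pos; [apply Rlt_le, Rdiv_lt_0_compat | apply Rle_0_sqr]; lra. }
  pose proof (sumR_ge_term m _ e0 Hpower He0) as Hterm.
  rewrite (current_energy n m ends L s0 s1 (fun e => D e t) (p t)) in Hterm by auto.
  unfold Q, current. rewrite current_sq by lra.
  apply Rmult_le_compat_l; [apply Rlt_le, Rdiv_lt_0_compat; lra | exact Hterm].
Qed.

Lemma current_vanishes : tends_to_0_at_infty (fun t => Q t e0).
Proof.
  destruct source_potential_bound as [C HC].
  pose proof (HL e0 He0) as HLe0.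
  intros eps Heps.
  pose proof (Rmax_l C 1); pose proof (Rmax_r C 1).
  set (C' := Rmax C 1) in *.
  destruct (diameter_vanishes (eps * eps * L e0 / C')) as [T HT].
  { apply Rdiv_lt_0_compat; [apply Rmult_lt_0_compat; [nra|]|]; lra. }
  exists (Rmax T 1); intros t Ht. pose proof (Rmax_l T 1); pose proof (Rmax_r T 1).
  specialize (HT t ltac:(lra)). pose proof (diameter_pos e0 t He0 ltac:(lra)) as HDpos.
  rewrite Rabs_right in HT by lra.
  pose proof (current_sq_bound t ltac:(lra)) as Hsq.
  pose proof (HC t ltac:(lra)) as HCt.
  assert (Hsq' : Q t e0 * Q t e0 < eps * eps).
  { apply Rle_lt_trans with (D e0 t / L e0 * C').
    - eapply Rle_trans; [exact Hsq|].
      apply Rmult_le_compat_l; [apply Rlt_le, Rdiv_lt_0_compat|]; lra.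
    - apply (Rmult_lt_reg_r (L e0 / C')); [apply Rdiv_lt_0_compat; lra|].
      replace (D e0 t / L e0 * C' * (L e0 / C')) with (D e0 t) by (field; lra).
      replace (eps * eps * (L e0 / C')) with (eps * eps * L e0 / C') by (field; lra). lra. }
  assert (Habs_sq : Rabs (Q t e0) * Rabs (Q t e0) = Q t e0 * Q t e0)
    by (rewrite <- Rabs_mult; apply Rabs_right; nra).
  apply Rnot_le_lt; intros Hge. nra.
Qed.

End Trajectory.

Theorem mainTheorem7
  (n m : nat) (ends : nat -> nat * nat) (s0 s1 : nat) (L : nat -> R)
  (D : nat -> R -> R) (p : R -> nat -> R)
  (Hsimple : simple_graph n m ends)
  (Hconn : connected n m ends)
  (Hs0 : (s0 < n)%nat) (Hs1 : (s1 < n)%nat) (Hs01 : s0 <> s1)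
  (HL : forall e, (e < m)%nat -> L e > 0)
  (HD0 : forall e, (e < m)%nat -> D e 0 > 0)
  (* right-continuity of the trajectory at the initial time 0 *)
  (Hcont0 : forall e, (e < m)%nat -> forall eps, eps > 0 ->
     exists delta, delta > 0 /\
       forall t, 0 <= t < delta -> Rabs (D e t - D e 0) < eps)
  (* potentials at each time t >= 0 *)
  (Hpot : forall t, t >= 0 -> potentials n m ends L s0 s1 (fun e => D e t) (p t))
  (* Physarum dynamics: dD_e/dt = |Q_e| - D_e for t > 0 *)
  (Hdyn : forall e, (e < m)%nat -> forall t, t > 0 ->
     derivable_pt_lim (D e) t
       (Rabs (current ends L (D e t) (p t) e) - D e t)) :
  forall e, (e < m)%nat -> ~ on_shortest_path m ends L s0 s1 e ->
    tends_to_0_at_infty (D e) /\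
    tends_to_0_at_infty (fun t => current ends L (D e t) (p t) e).
Proof.
  intros e0 He0 Hoff.
  destruct (off_shortest_path_cost n m ends L s0 s1 e0 Hsimple Hconn HL Hs0 Hs1 He0 Hoff)
    as (P & Ls & kappa & HP & HPl & Hkappa & Hcost).
  split.
  - exact (diameter_vanishes n m ends s0 s1 L D p Hsimple Hs0 Hs1 Hs01 HL HD0 Hcont0 Hpot Hdyn
             e0 P Ls kappa He0 HP HPl Hkappa Hcost).
  - exact (current_vanishes n m ends s0 s1 L D p Hsimple Hs0 Hs1 Hs01 HL HD0 Hcont0 Hpot Hdyn
             e0 P Ls kappa He0 HP HPl Hkappa Hcost).
Qed.
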